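(* In the M/M/1 setting below, $\mathrm{SW}^P_{opt}\le\mathrm{SW}^C_{opt}=\mathrm{SW}^S_{opt}$ holds in each of the following cases: (i) $\xi(0)\ge\bar\lambda$; (ii) $\xi(0)<\bar\lambda$ and $\lambda_{\max}\le(1+\epsilon)\lambda$, where $\epsilon=\sqrt{C/(R\mu)}$.
   Context: Setting: an M/M/1 queue with true (deterministic) Poisson arrival rate $\lambda>0$ and exponential service times with rate $\mu$, so $W(x)=1/(\mu-x)$ for $x\in[0,\mu)$. Each served customer receives reward $R$, pays fee $p$ (a transfer payment from the social optimizer's viewpoint), and incurs waiting cost $C>0$ per unit time, with $R>C/\mu$. Customers' beliefs about the arrival rate are described by a non-degenerate nonnegative random variable $\Lambda$ whose support has minimum $\lambda_{\min}$ and maximum $\lambda_{\max}$, with $0\le\lambda_{\min}<\lambda<\lambda_{\max}<\mu$. For $0\le p<R-C/\mu$, $\xi(p)=\mu-C/(R-p)$ (so $\xi(0)=\mu-C/R$). Let $\bar\lambda=\mu-1/\mathbb{E}[1/(\mu-\Lambda)]$. Joining probabilities: classical $q^C(p)=\min\{\xi(p)/\lambda,1\}$; shared belief $q^S(p)=1$ if $C\,\mathbb{E}[W(\Lambda)]\le R-p$, otherwise the unique $q\in[0,1)$ with $C\,\mathbb{E}[W(q\Lambda)]=R-p$; private belief $Q(p)=\min\{\xi(p)/\Lambda,1\}$. Social welfare rates: $\mathrm{SW}^C(p)=\lambda q^C(p)\,(R-C\,W(\lambda q^C(p)))$, $\mathrm{SW}^S(p)=\lambda q^S(p)\,(R-C\,W(\lambda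 q^S(p)))$, $\mathrm{SW}^P(p)=\mathbb{E}[\lambda Q(p)\,(R-C\,W(\lambda Q(p)))]$. Optimal values: $\mathrm{SW}^X_{opt}=\sup_{0\le p<R-C/\mu}\mathrm{SW}^X(p)$ for $X\in\{C,S,P\}$. *)

From HB Require Import structures.
From mathcomp Require Import all_boot all_order all_algebra.
From mathcomp Require Import all_classical all_reals all_analysis.
Set Implicit Arguments. Unset Strict Implicit. Unset Printing Implicit Defensive.
Import Order.TTheory GRing.Theory Num.Theory.
Import numFieldNormedType.Exports.
Local Open Scope classical_set_scope.
Local Open Scope ring_scope.

Section mm1.
Context {R : realType} {d : measure_display} {T : measurableType d}.
Variable P : probability T R.

(* Expected sojourn time W(x) = 1/(mu - x) in an M/M/1 queue *)
Definition W (mu x : R) : R := (mu - x)^-1.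

Definition xi (mu Rw C p : R) : R := mu - C / (Rw - p).

Definition lbar (mu : R) (L : T -> R) : R :=
  mu - (fine ('E_P[fun w => W mu (L w)]))^-1.

Definition rv_support (L : T -> R) : set R :=
  [set x | forall e : R, 0 < e -> (0 < P [set w | (`|L w - x| < e)%R])%E].

Definition qC (lam mu Rw C p : R) : R := Order.min (xi mu Rw C p / lam) 1.

Definition qS (L : T -> R) (mu Rw C p : R) : R :=
  if `[< (C%:E * 'E_P[fun w => W mu (L w)] <= (Rw - p)%:E)%E >] then 1
  else xget 0 [set q : R | 0 <= q < 1 /\
                 (C%:E * 'E_P[fun w => W mu (q * L w)] = (Rw - p)%:E)%E].

(* private belief joining probability Q(p) = min{xi(p)/Lambda, 1}
   (equal to 1 when Lambda <= xi(p), in particular when Lambda = 0) *)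
Definition Qp (L : T -> R) (mu Rw C p : R) (w : T) : R :=
  if L w <= xi mu Rw C p then 1 else xi mu Rw C p / L w.

Definition SW_C (lam mu Rw C p : R) : \bar R :=
  (lam * qC lam mu Rw C p * (Rw - C * W mu (lam * qC lam mu Rw C p)))%:E.

Definition SW_S (L : T -> R) (lam mu Rw C p : R) : \bar R :=
  (lam * qS L mu Rw C p * (Rw - C * W mu (lam * qS L mu Rw C p)))%:E.

Definition SW_P (L : T -> R) (lam mu Rw C p : R) : \bar R :=
  'E_P[fun w => lam * Qp L mu Rw C p w * (Rw - C * W mu (lam * Qp L mu Rw C p w))].

Definition SWopt (SW : R -> \bar R) (mu Rw C : R) : \bar R :=
  ereal_sup [set SW p | p in [set p : R | 0 <= p < Rw - C / mu]].

End mm1.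

From HB Require Import structures.
From mathcomp Require Import all_boot all_order all_algebra.
From mathcomp Require Import all_classical all_reals all_analysis.
From mathcomp Require Import ring lra measurable_realfun.
Import Order.TTheory GRing.Theory Num.Theory.
Import numFieldNormedType.Exports.
Local Open Scope classical_set_scope.
Local Open Scope ring_scope.

(* Every welfare rate has the form welfare(x) = x (R - C W(x)) evaluated at an
   effective arrival rate x = lambda * (joining probability) in [0, lambda], and
   welfare is maximised on [0, lambda] at m = min(lambda, mu - mu eps).  A suitable
   classical fee induces exactly the rate m, so SW^C_opt = welfare(m) >= SW^P_opt.
   Under shared beliefs the fee R - C E[W(q Lambda)] makes q the unique equilibrium,
   uniqueness coming from strict monotonicity of q |-> E[W(q Lambda)] (the law of
   Lambda charges every neighbourhood of lambda_max).  The rate m is reached with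
   q = m / lambda as soon as that fee is nonnegative: in case (i) because
   C E[W(Lambda)] <= R is exactly lbar <= xi(0), in case (ii) because
   Lambda <= lambda_max a.s. gives q Lambda <= (1 + eps) m <= mu - C / R. *)

Section support.
Context {R : realType} {d : measure_display} {T : measurableType d}.
Variables (P : probability T R) (L : {RV P >-> R}).

Let measurable_L_itv (i : interval R) : measurable (L @^-1` [set` i]).
Proof. exact: measurable_funPTI (measurable_itv i). Qed.

Let ball_preimage (s e : R) :
  [set w | `|L w - s| < e] = L @^-1` [set` `]s - e, s + e[].
Proof. by apply/seteqP; split => w /=; rewrite in_itv /= distrC ltr_distlC. Qed.

Lemma rv_support_itv (a b : R) : a <= b ->
  (0 < P [set w | (a <= L w <= b)%R])%E -> exists2 s, a <= s <= b & rv_support P L s.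
Proof.
move=> ab Pab.
have closed_preimage u v : [set w | u <= L w <= v] = L @^-1` [set` `[u, v]].
  by apply/seteqP; split => w /=; rewrite in_itv.
(* the witness is the largest x for which [x, b] still carries positive mass *)
pose S := [set x | x <= b /\ (0 < P [set w | (x <= L w <= b)%R])%E].
have supS : has_sup S by split; [exists a | exists b => x []].
exists (sup S).
  by rewrite sup_upper_bound //= ge_sup //; [exists a | move=> x []].
move=> e e0; have [x [xb Px] ltx] := sup_adherent e0 supS.
pose A := [set w | (`|L w - sup S| < e)%R].
pose B := [set w | (sup S + e <= L w <= b)%R].
have mA : measurable A by rewrite /A ball_preimage.
have mB : measurable B by rewrite /B closed_preimage.
have PB0 : P B = 0%E.
  have [seb|bse] := leP (sup S + e) b; last first.
    rewrite (_ : B = set0) ?measure0 //; apply/seteqP; split => w //=.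
    by move=> /andP[h1 h2]; move: (le_trans h1 h2); rewrite leNgt bse.
  apply/eqP; rewrite eq_le measure_ge0 andbT leNgt; apply/negP => Ppos.
  by have := sup_upper_bound supS (conj seb Ppos); rewrite gerDl leNgt e0.
apply: lt_le_trans Px _; rewrite -[P A]adde0 -PB0.
apply: le_trans (measureU2 P mA mB).
apply: le_measure; rewrite ?inE ?closed_preimage //; first exact: measurableU.
move=> w /= /andP[xL Lb]; rewrite /A /B /=.
have [Lse|seL] := ltP (L w) (sup S + e); [left|right; exact/andP].
by rewrite distrC ltr_distlC Lse andbT (lt_le_trans ltx xL).
Qed.

Lemma rv_support_ub_ae (M : R) : (forall x, rv_support P L x -> x <= M) ->
  P (L @^-1` `]M, +oo[) = 0%E.
Proof.
move=> suppM.
pose B (n : nat) := [set w | (M + n.+1%:R^-1 <= L w <= M + n.+1%:R)%R].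
have negB n : P.-negligible (B n).
  have mB : measurable (B n).
    by rewrite (_ : B n = L @^-1` `[M + n.+1%:R^-1, M + n.+1%:R]).
  apply/negligibleP => //; apply/eqP; rewrite eq_le measure_ge0 andbT leNgt.
  apply/negP => PB; have [|s /andP[Ms _] /suppM] := rv_support_itv _ _ _ PB.
    by rewrite lerD2l (@le_trans _ _ 1) ?ler1n // invf_le1 ?ler1n ?ltr0n.
  by apply/negP; rewrite -ltNge (lt_le_trans _ Ms) // ltrDl invr_gt0 ltr0n.
have [N [mN PN BN]] := negligible_bigcup negB.
apply/eqP; rewrite eq_le measure_ge0 andbT -PN le_measure ?inE //.
move=> w /=; rewrite in_itv /= andbT => Mw; apply: BN.
set t := L w - M; have t0 : 0 < t by rewrite subr_gt0.
have := truncnS_gt (t + t^-1); move: (Num.truncn _) => n tn.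
have nt : n.+1%:R^-1 < t.
  by rewrite invf_plt ?posrE ?ltr0n //; apply: le_lt_trans tn; rewrite lerDr ltW.
have tn' : t < n.+1%:R by apply: le_lt_trans tn; rewrite lerDl ltW // invr_gt0.
exists n => //; rewrite /B /= -/t.
by move: (n.+1%:R) nt tn' => k; rewrite /t; move: k^-1 => k'; lra.
Qed.

Lemma rv_support_tail (c x : R) : rv_support P L x -> c < x ->
  (0 < P [set w | (c < L w)%R])%E.
Proof.
move=> suppx cx; have xc0 : 0 < x - c by rewrite subr_gt0.
apply: lt_le_trans (suppx _ xc0) _.
apply: le_measure; rewrite ?inE ?ball_preimage //.
  rewrite (_ : [set w | _] = L @^-1` `]c, +oo[) //.
  by apply/seteqP; split => w /=; rewrite in_itv /= andbT.
move=> w /=; rewrite in_itv /= => /andP[+ _]; lra.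
Qed.
End support.

Lemma measurable_inv (R : realType) : measurable_fun [set: R] (@GRing.inv R).
Proof.
rewrite -(setvU [set 0]); apply/measurable_funU => //; first exact: measurableC.
split; last exact: measurable_fun_set1.
apply: open_continuous_measurable_fun; first by rewrite openC; exact: closed_eq.
by move=> x /set_mem /eqP x0; exact: inv_continuous.
Qed.

Lemma measurable_W (R : realType) (d : measure_display) (T : measurableType d)
    (mu : R) (g : T -> R) :
  measurable_fun setT g -> measurable_fun setT (fun w => W mu (g w)).
Proof.
move=> mg; apply: (measurableT_comp (measurable_inv R)).
exact: measurable_funB.
Qed.

Section W_monotone.
Context {R : realType}.
Variables (mu : R).

Lemma W_le (x y : R) : x <= y -> y < mu -> W mu x <= W mu y.
Proof.
move=> xy ymu; rewrite /W lef_pV2 ?posrE ?lerD2l ?lerN2 // subr_gt0 //.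
exact: le_lt_trans xy ymu.
Qed.

Lemma W_ge0 (x : R) : x < mu -> 0 <= W mu x.
Proof. by move=> xmu; rewrite /W invr_ge0 subr_ge0 ltW. Qed.

Lemma W_sub_ge (x y : R) : 0 <= x <= y -> y < mu ->
  (y - x) / (mu * mu) <= W mu y - W mu x.
Proof.
move=> /andP[x0 xy] ymu; have xmu := le_lt_trans xy ymu.
have mux : 0 < mu - x by rewrite subr_gt0.
have muy : 0 < mu - y by rewrite subr_gt0.
have -> : W mu y - W mu x = (y - x) / ((mu - x) * (mu - y)).
  by rewrite /W; field; rewrite !gt_eqF.
apply: ler_wpM2l; first by rewrite subr_ge0.
rewrite lef_pV2 ?posrE ?mulr_gt0 ?(le_lt_trans x0 xmu) //.
by apply: ler_pM; lra.
Qed.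
End W_monotone.

Section bounded_expectation.
Context {R : realType} {d : measure_display} {T : measurableType d}.
Variable P : probability T R.

Lemma bounded_Lfun1 (f : T -> R) (k : R) : measurable_fun setT f ->
  (forall w, `|f w| <= k) -> f \in Lfun P 1.
Proof.
move=> mf fk; apply/Lfun1_integrable/measurable_bounded_integrable => //.
  exact: (le_lt_trans (probability_le1 P measurableT) (ltry 1)).
exists k; split; first exact: num_real.
by move=> y ky w _; apply: le_trans (fk w) (ltW ky).
Qed.

Lemma le_expectation (X Y : T -> R) : X \in Lfun P 1 -> Y \in Lfun P 1 ->
  (forall w, X w <= Y w) -> ('E_P[X] <= 'E_P[Y])%E.
Proof.
move=> /Lfun1_integrable iX /Lfun1_integrable iY XY.
by rewrite unlock; apply: le_integral => // w _; rewrite lee_fin.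
Qed.
End bounded_expectation.

Section welfare.
Context {R : realType}.
Variables (mu Rw C : R).

Definition welfare (x : R) : R := x * (Rw - C * W mu x).

(* [mu - mu * e] is the unconstrained maximiser of [welfare] when C = Rw mu e^2 *)
Definition opt_rate (lam e : R) : R := Num.min lam (mu - mu * e).

Lemma measurable_welfare : measurable_fun setT welfare.
Proof.
apply: measurable_funM => //; apply: measurable_funB => //.
by apply: measurable_funM => //; exact: measurable_W.
Qed.

Lemma welfare_le (x z : R) : x < mu -> z < mu ->
  0 <= (z - x) * (Rw * (mu - x) * (mu - z) - C * mu) -> welfare x <= welfare z.
Proof.
move=> xmu zmu h; rewrite -subr_ge0.
have -> : welfare z - welfare x =
    (z - x) * (Rw * (mu - x) * (mu - z) - C * mu) / ((mu - x) * (mu - z)).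
  by rewrite /welfare /W; field; rewrite !subr_eq0 !gt_eqF.
by rewrite divr_ge0 // mulr_ge0 // subr_ge0 ltW.
Qed.

Lemma welfare_le_opt (e lam x : R) : 0 <= Rw -> 0 <= e -> C = Rw * mu * (e * e) ->
  0 <= x <= lam -> lam < mu -> welfare x <= welfare (opt_rate lam e).
Proof.
move=> Rw0 e0 CRe /andP[x0 xlam] lammu; rewrite /opt_rate.
have mu0 : 0 <= mu by lra.
have mue0 : 0 <= mu * e by rewrite mulr_ge0.
have [lam_le|opt_lt] := leP lam (mu - mu * e).
  apply: welfare_le => //; first lra.
  apply: mulr_ge0; rewrite subr_ge0 // CRe.
  have -> : Rw * mu * (e * e) * mu = Rw * ((mu * e) * (mu * e)) by ring.
  by rewrite -(mulrA Rw (mu - x)); apply: ler_wpM2l => //; apply: ler_pM; lra.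
apply: welfare_le; try lra.
have -> : (mu - mu * e - x) * (Rw * (mu - x) * (mu - (mu - mu * e)) - C * mu) =
    Rw * (mu * e) * (mu - x - mu * e) ^+ 2 by rewrite CRe; ring.
by apply: mulr_ge0; [rewrite !mulr_ge0 | exact: sqr_ge0].
Qed.

Lemma welfare_norm_le (lam y : R) : 0 <= Rw -> 0 <= C -> 0 <= y <= lam -> lam < mu ->
  `|welfare y| <= lam * (Rw + C * W mu lam).
Proof.
move=> Rw0 C0 /andP[y0 ylam] lammu; have ymu := le_lt_trans ylam lammu.
rewrite /welfare normrM ger0_norm // ler_pM // (le_trans (ler_normB _ _)) //.
by rewrite ger0_norm // lerD2l normrM ger0_norm ?ger0_norm ?W_ge0 // ler_wpM2l ?W_le.
Qed.

Lemma opt_rate_bound (e lam : R) : 0 < Rw -> 0 <= e -> C = Rw * mu * (e * e) ->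
  (1 + e) * opt_rate lam e <= mu - C / Rw.
Proof.
move=> Rw_gt0 e0 CRe; rewrite /opt_rate; apply: le_trans (_ : (1 + e) * (mu - mu * e) <= _).
  by rewrite ler_wpM2l ?ge_min ?lexx ?orbT //; lra.
by rewrite CRe le_eqVlt; apply/orP; left; apply/eqP; field; rewrite gt_eqF.
Qed.
End welfare.

Lemma SWopt_eq {R : realType} (F : R -> \bar R) (mu Rw C v : R) :
  (forall p, 0 <= p < Rw - C / mu -> (F p <= v%:E)%E) ->
  (exists2 p, 0 <= p < Rw - C / mu & F p = v%:E) -> SWopt F mu Rw C = v%:E.
Proof.
move=> ub [p adm Fp]; apply/eqP; rewrite eq_le; apply/andP; split.
  by apply: ge_ereal_sup => _ [q admq <-]; exact: ub.
by rewrite -Fp; apply: ereal_sup_ubound; exists p.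
Qed.

Section optimal_welfare.
Context {R : realType} {d : measure_display} {T : measurableType d}.
Variables (P : probability T R) (L : {RV P >-> R}) (lam mu Rw C : R).
Hypotheses (lam_gt0 : 0 < lam) (lam_lt_mu : lam < mu) (C_gt0 : 0 < C).
Hypothesis CmuRw : C / mu < Rw.
Variable m : R.
Hypothesis m_opt : forall x, 0 <= x <= lam -> welfare mu Rw C x <= welfare mu Rw C m.

Let mu_gt0 : 0 < mu. Proof. exact: lt_trans lam_gt0 lam_lt_mu. Qed.
Let Rw_gt0 : 0 < Rw. Proof. exact: lt_trans (divr_gt0 C_gt0 mu_gt0) CmuRw. Qed.

Let welfare_le_m q : 0 <= q <= 1 -> welfare mu Rw C (lam * q) <= welfare mu Rw C m.
Proof.
move=> /andP[q0 q1]; apply: m_opt.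
by rewrite (mulr_ge0 (ltW lam_gt0) q0) ler_piMr // ltW.
Qed.

Lemma xi_gt0 p : 0 <= p < Rw - C / mu -> 0 < xi mu Rw C p.
Proof.
move=> /andP[p0 pRw]; have Cmu_gt0 := divr_gt0 C_gt0 mu_gt0.
have Rwp_gt0 : 0 < Rw - p by lra.
have : C / mu < Rw - p by lra.
by rewrite ltr_pdivrMr // /xi subr_gt0 ltr_pdivrMr // mulrC.
Qed.

Lemma SWopt_C_eq : 0 < m <= lam -> m <= mu - C / Rw ->
  SWopt (SW_C lam mu Rw C) mu Rw C = (welfare mu Rw C m)%:E.
Proof.
move=> /andP[m0 mlam] m_le; have mu_m : 0 < mu - m by rewrite subr_gt0 (le_lt_trans mlam).
apply: SWopt_eq => [p adm|].
  rewrite lee_fin; apply: welfare_le_m; have xi0 := xi_gt0 _ adm.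
  by rewrite /qC le_min ge_min lexx orbT ler01 andbT divr_ge0 ?ltW.
exists (Rw - C / (mu - m)).
  rewrite subr_ge0 ler_pdivrMr // mulrC -ler_pdivrMr // lerBrDr -lerBrDl m_le /=.
  by rewrite ltrD2l ltrN2 ltr_pM2l // ltf_pV2 ?posrE // gtrDl oppr_lt0.
have xi_m : xi mu Rw C (Rw - C / (mu - m)) = m.
  rewrite /xi (_ : Rw - (Rw - C / (mu - m)) = C / (mu - m)); last by ring.
  by field; rewrite !gt_eqF.
have qC_m : lam * qC lam mu Rw C (Rw - C / (mu - m)) = m.
  rewrite /qC xi_m (min_idPl _); first by rewrite mulrC divfK // gt_eqF.
  by rewrite ler_pdivrMr // mul1r.
by rewrite /SW_C qC_m.
Qed.

Lemma Qp_bounds p w : 0 <= p < Rw - C / mu -> 0 <= Qp L mu Rw C p w <= 1.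
Proof.
move=> adm; have xi0 := xi_gt0 _ adm; rewrite /Qp.
case: ifPn => [_|]; first by rewrite ler01 lexx.
rewrite -ltNge => xiL; have L0 := lt_trans xi0 xiL.
by rewrite (divr_ge0 (ltW xi0) (ltW L0)) ler_pdivrMr // mul1r ltW.
Qed.

Lemma measurable_Qp p : 0 <= p < Rw - C / mu -> measurable_fun setT (Qp L mu Rw C p).
Proof.
move=> adm; have xi0 := xi_gt0 _ adm; set x := xi mu Rw C p in xi0.
have -> : Qp L mu Rw C p = fun w => x / Num.max (L w) x.
  apply/funext => w; rewrite /Qp -/x; case: ifPn => [Lx|].
    by rewrite (max_idPr Lx) divff // gt_eqF.
  by rewrite -ltNge => /ltW xL; rewrite (max_idPl xL).
apply: measurable_funM => //; apply: (measurableT_comp (measurable_inv R)).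
exact: measurable_maxr.
Qed.

Lemma SWopt_P_le :
  (SWopt (SW_P P L lam mu Rw C) mu Rw C <= (welfare mu Rw C m)%:E)%E.
Proof.
apply: ge_ereal_sup => _ [p adm <-].
rewrite /SW_P -(expectation_cst P (welfare mu Rw C m)).
apply: le_expectation; last by move=> w; exact/welfare_le_m/Qp_bounds.
  apply: (@bounded_Lfun1 _ _ _ _ _ (lam * (Rw + C * W mu lam))).
    apply: (measurableT_comp (measurable_welfare mu Rw C)).
    by apply: measurable_funM => //; exact: measurable_Qp.
  move=> w; have /andP[Q0 Q1] := Qp_bounds _ w adm.
  apply: welfare_norm_le => //; [exact: ltW | exact: ltW |].
  by rewrite (mulr_ge0 (ltW lam_gt0) Q0) ler_piMr // ltW.
exact: Lfun_cst.
Qed.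

Lemma qS_bounds p : 0 <= qS P L mu Rw C p <= 1.
Proof.
rewrite /qS; case: ifP => _; first by rewrite ler01 lexx.
set S := [set q : R | _]; have [[q Sq]|noS] := pselect (exists q, S q).
  by have [/andP[q0 q1] _] := xgetPex 0 (ex_intro _ q Sq); rewrite q0 ltW.
by rewrite xgetPN ?lexx ?ler01 // => q Sq; apply: noS; exists q.
Qed.

Lemma SWopt_S_eq p : 0 <= p < Rw - C / mu -> lam * qS P L mu Rw C p = m ->
  SWopt (SW_S P L lam mu Rw C) mu Rw C = (welfare mu Rw C m)%:E.
Proof.
move=> adm qSm; apply: SWopt_eq => [q _|]; last by exists p; rewrite // /SW_S qSm.
by rewrite lee_fin; apply/welfare_le_m/qS_bounds.
Qed.
End optimal_welfare.

Arguments SWopt_C_eq {R lam mu Rw C} _ _ _ _ {m}.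
Arguments SWopt_P_le {R d T} P L {lam mu Rw C} _ _ _ _ {m}.
Arguments SWopt_S_eq {R d T} P L {lam mu Rw C} _ {m}.

Section mean_wait.
Context {R : realType} {d : measure_display} {T : measurableType d}.
Variables (P : probability T R) (L : {RV P >-> R}) (mu M : R).
Hypotheses (L_ge0 : forall w, 0 <= L w) (M_gt0 : 0 < M) (M_lt_mu : M < mu).
Hypotheses (supp_M : rv_support P L M) (supp_le_M : forall x, rv_support P L x -> x <= M).

Definition mean_wait (q : R) : R := fine 'E_P[fun w => W mu (q * L w)].

Let M_ge0 : 0 <= M. Proof. exact: ltW. Qed.
Let mu_gt0 : 0 < mu. Proof. exact: lt_trans M_gt0 M_lt_mu. Qed.
Let L_le_M_ae : P (L @^-1` `]M, +oo[) = 0%E.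
Proof. exact: rv_support_ub_ae. Qed.

(* L is bounded by M only almost surely; integrability is proved for the
   truncation, which has the same expectations *)
Let Lt w := Order.min (L w) M.

Let Lt_bounds w : 0 <= Lt w <= M.
Proof. by rewrite /Lt le_min L_ge0 M_ge0 ge_min lexx orbT. Qed.

Let qLt_bounds q w : 0 <= q <= 1 -> 0 <= q * Lt w <= M.
Proof.
move=> /andP[q0 q1]; have /andP[Lt0 LtM] := Lt_bounds w.
by rewrite mulr_ge0 //= -[M]mul1r ler_pM.
Qed.

Let measurable_W_trunc q : measurable_fun setT (fun w => W mu (q * Lt w)).
Proof. by apply/measurable_W/measurable_funM => //; exact: measurable_minr. Qed.

Let expectation_W_trunc q :
  ('E_P[fun w => W mu (q * L w)] = 'E_P[fun w => W mu (q * Lt w)])%E.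
Proof.
rewrite unlock; apply: ae_eq_integral => //.
- by apply/measurable_EFinP/measurable_W/measurable_funM.
- exact/measurable_EFinP.
exists (L @^-1` `]M, +oo[); split => //; first exact: measurable_funPTI.
move=> w /= neq; rewrite in_itv /= andbT ltNge; apply/negP => LM; apply: neq.
by rewrite /Lt (min_idPl LM).
Qed.

Let W_trunc_Lfun q : 0 <= q <= 1 -> (fun w => W mu (q * Lt w)) \in Lfun P 1.
Proof.
move=> q01; apply: (@bounded_Lfun1 _ _ _ _ _ (W mu M)) => // w.
have /andP[qLt0 qLtM] := qLt_bounds _ w q01.
by rewrite ger0_norm ?W_le ?W_ge0 //; exact: le_lt_trans qLtM M_lt_mu.
Qed.

Lemma expectation_W_fin q : 0 <= q <= 1 ->
  ('E_P[fun w => W mu (q * L w)])%E = (mean_wait q)%:E.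
Proof.
move=> q01; rewrite /mean_wait fineK // expectation_W_trunc.
exact/expectation_fin_num/W_trunc_Lfun.
Qed.

Lemma expectation_W_mean_wait1 : ('E_P[fun w => W mu (L w)])%E = (mean_wait 1)%:E.
Proof.
rewrite -expectation_W_fin ?ler01 ?lexx //.
by congr expectation; apply/funext => w; rewrite mul1r.
Qed.

Lemma mean_wait0 : mean_wait 0 = mu^-1.
Proof.
rewrite /mean_wait (_ : (fun w => _) = cst mu^-1) ?expectation_cst //.
by apply/funext => w; rewrite /W mul0r subr0.
Qed.

Lemma mean_wait_le q b : 0 <= q <= 1 -> q * M <= b -> b < mu ->
  mean_wait q <= (mu - b)^-1.
Proof.
move=> q01 qMb bmu; rewrite -lee_fin -expectation_W_fin // expectation_W_trunc.
rewrite -[X in (_ <= X)%E](expectation_cst P).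
apply: le_expectation; [exact: W_trunc_Lfun | exact: Lfun_cst | move=> w].
have /andP[_ qLtM] := qLt_bounds _ w q01.
have /andP[q0 _] := q01.
apply: W_le bmu; apply: le_trans qMb; apply: ler_wpM2l => //.
by have /andP[] := Lt_bounds w.
Qed.

Lemma mean_wait_lt q1 q2 : 0 <= q1 -> q1 < q2 -> q2 <= 1 ->
  mean_wait q1 < mean_wait q2.
Proof.
move=> q10 q12 q21; pose c := M / 2.
have c_lt_M : c < M by rewrite /c ltr_pdivrMr // ltr_pMr // ltr1n.
have tail_pos : (0 < P [set w | (c < L w)%R])%E by exact: rv_support_tail supp_M _.
have q1_01 : 0 <= q1 <= 1 by rewrite q10 ltW // (lt_le_trans q12 q21).
have q2_01 : 0 <= q2 <= 1 by rewrite q21 andbT ltW // (le_lt_trans q10 q12).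
pose A := [set w | (c < L w)%R].
have mA : measurable A.
  rewrite (_ : A = L @^-1` `]c, +oo[); first exact: measurable_funPTI.
  by apply/seteqP; split => w /=; rewrite in_itv /= andbT.
have PA_gt0 : 0 < fine (P A).
  by rewrite fine_gt0 // tail_pos (le_lt_trans (probability_le1 P mA)) ?ltry.
pose k := (q2 - q1) * c / (mu * mu).
have k_gt0 : 0 < k by rewrite divr_gt0 ?mulr_gt0 ?subr_gt0 ?divr_gt0.
have A_Lfun : \1_A \in Lfun P 1.
  apply: (@bounded_Lfun1 _ _ _ _ _ 1) => [|w]; first exact: measurable_indic.
  by rewrite indicE; case: (_ \in _); rewrite /= ?normr1 ?normr0.
have kA_Lfun : k \o* \1_A \in Lfun P 1 by exact: Lfun_scale.
(* pointwise, W(q2 Lt) - W(q1 Lt) >= k on A by [W_sub_ge] *)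
have gap : ('E_P[fun w => W mu (q1 * Lt w)] + (k * fine (P A))%:E <=
            'E_P[fun w => W mu (q2 * Lt w)])%E.
  rewrite EFinM fineK ?fin_num_measure // -expectation_indic // -expectationZl //.
  rewrite -expectationD ?W_trunc_Lfun //.
  apply: le_expectation; [exact/rpredD/kA_Lfun/W_trunc_Lfun | exact: W_trunc_Lfun |].
  move=> w /=; have /andP[qLt0 qLtM] := qLt_bounds q2 w q2_01.
  have qLt12 : q1 * Lt w <= q2 * Lt w.
    by apply: ler_wpM2r (ltW q12); have /andP[] := Lt_bounds w.
  have qLt_mu : q2 * Lt w < mu by exact: le_lt_trans qLtM M_lt_mu.
  rewrite indicE; case: (boolP (w \in A)) => [wA|_] /=; last first.
    by rewrite mulr0n mul0r addr0 W_le.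
  rewrite mulr1n mul1r addrC -lerBrDr.
  apply: le_trans (W_sub_ge _ _ _ _ qLt_mu); last first.
    by rewrite qLt12 mulr_ge0 //; have /andP[] := Lt_bounds w.
  rewrite /k -mulrBl ler_pM2r ?invr_gt0 ?mulr_gt0 // ler_wpM2l ?subr_ge0 ?(ltW q12) //.
  by rewrite /Lt le_min (ltW c_lt_M) andbT; apply: ltW; move: wA; rewrite inE.
rewrite -!expectation_W_trunc !expectation_W_fin // -EFinD lee_fin in gap.
by apply: lt_le_trans gap; rewrite ltrDl mulr_gt0.
Qed.

Lemma mean_wait_inj q1 q2 : 0 <= q1 <= 1 -> 0 <= q2 <= 1 ->
  mean_wait q1 = mean_wait q2 -> q1 = q2.
Proof.
move=> /andP[q10 q11] /andP[q20 q21] eq12.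
have [lt12|lt21|//] := ltgtP q1 q2.
  by have := mean_wait_lt _ _ q10 lt12 q21; rewrite eq12 ltxx.
by have := mean_wait_lt _ _ q20 lt21 q11; rewrite eq12 ltxx.
Qed.

Lemma qS_mean_wait (Rw C q : R) : 0 < C -> 0 < q <= 1 ->
  qS P L mu Rw C (Rw - C * mean_wait q) = q.
Proof.
move=> C_gt0 /andP[q0 q1]; have q01 : 0 <= q <= 1 by rewrite ltW.
rewrite /qS expectation_W_mean_wait1 -EFinM lee_fin opprB addrC subrK.
rewrite ler_pM2l //; have [q_lt1|q_ge1] := ltP q 1; last first.
  have /eqP -> : q == 1 by rewrite eq_le q1 q_ge1.
  by rewrite asboolT.
rewrite asboolF; last by apply/negP; rewrite -ltNge mean_wait_lt // ltW.
apply: xget_unique.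
  by rewrite /= ltW // q_lt1 expectation_W_fin // -EFinM.
move=> y [/andP[y0 y1] Ey]; apply: mean_wait_inj; rewrite ?y0 ?ltW //.
apply: (mulfI (lt0r_neq0 C_gt0)); apply: EFin_inj.
by rewrite EFinM -expectation_W_fin ?y0 ?ltW.
Qed.

Let lbar_le_xi0 (Rw C : R) : 0 < Rw -> 0 < C ->
  lbar P mu L <= xi mu Rw C 0 -> C * mean_wait 1 <= Rw.
Proof.
move=> Rw_gt0 C_gt0.
have mw1_gt0 : 0 < mean_wait 1.
  by rewrite (lt_trans _ (mean_wait_lt _ _ (lexx 0) ltr01 (lexx 1))) // mean_wait0 invr_gt0.
rewrite /lbar expectation_W_mean_wait1 /xi subr0 lerD2l lerN2.
by rewrite ler_pdivrMr // mulrC -ler_pdivlMr // divrr ?unitfE ?gt_eqF // mul1r.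
Qed.

Lemma mean_wait_le_Rw (Rw C q : R) : 0 < Rw -> 0 < C -> 0 < q <= 1 ->
  lbar P mu L <= xi mu Rw C 0 \/ q * M <= mu - C / Rw -> C * mean_wait q <= Rw.
Proof.
move=> Rw_gt0 C_gt0 /andP[q0 q1] [lbar_le|qM_le].
  apply: le_trans (lbar_le_xi0 _ _ Rw_gt0 C_gt0 lbar_le); rewrite ler_pM2l //.
  move: q1; rewrite le_eqVlt => /orP[/eqP -> // | q_lt1].
  exact: ltW (mean_wait_lt _ _ (ltW q0) q_lt1 (lexx 1)).
have q01 : 0 <= q <= 1 by rewrite ltW.
have bmu : mu - C / Rw < mu by rewrite gtrBl divr_gt0.
have := mean_wait_le _ _ q01 qM_le bmu; rewrite subKr invf_div => mw_le.
by apply: le_trans (ler_wpM2l (ltW C_gt0) mw_le) _; rewrite mulrC divfK ?gt_eqF.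
Qed.

Lemma qS_fee_exists (Rw C q : R) : 0 < C -> 0 < q <= 1 -> C * mean_wait q <= Rw ->
  exists2 p, 0 <= p < Rw - C / mu & qS P L mu Rw C p = q.
Proof.
move=> C_gt0 q01 fee_ok; exists (Rw - C * mean_wait q); last exact: qS_mean_wait.
have /andP[q0 q1] := q01; rewrite subr_ge0 fee_ok ltrD2l ltrN2 ltr_pM2l //.
by rewrite -mean_wait0 (mean_wait_lt _ _ (lexx 0)).
Qed.
End mean_wait.

Arguments mean_wait_le_Rw {R d T P L mu M}.
Arguments qS_fee_exists {R d T P L mu M}.

Theorem theorem4 (R : realType) (d : measure_display) (T : measurableType d)
  (P : probability T R) (L : {RV P >-> R})
  (lam mu Rw C lmin lmax : R) :
  0 < lam -> 0 < C -> C / mu < Rw ->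
  (forall w, 0 <= L w) ->
  ~ (exists c : R, P [set w | L w = c] = 1%E) ->
  rv_support P L lmin -> rv_support P L lmax ->
  (forall x, rv_support P L x -> lmin <= x <= lmax) ->
  0 <= lmin -> lmin < lam -> lam < lmax -> lmax < mu ->
  (lbar P mu L <= xi mu Rw C 0 \/
   (xi mu Rw C 0 < lbar P mu L /\ lmax <= (1 + Num.sqrt (C / (Rw * mu))) * lam)) ->
  (SWopt (SW_P P L lam mu Rw C) mu Rw C <= SWopt (SW_C lam mu Rw C) mu Rw C)%E /\
  SWopt (SW_C lam mu Rw C) mu Rw C = SWopt (SW_S P L lam mu Rw C) mu Rw C.
Proof.
move=> lam_gt0 C_gt0 CmuRw L_ge0 _ _ supp_lmax supp_in _ _ lam_lmax lmax_mu cases.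
have lmax_gt0 := lt_trans lam_gt0 lam_lmax; have lam_mu := lt_trans lam_lmax lmax_mu.
have mu_gt0 := lt_trans lmax_gt0 lmax_mu.
have Rw_gt0 : 0 < Rw := lt_trans (divr_gt0 C_gt0 mu_gt0) CmuRw.
set e := Num.sqrt (C / (Rw * mu)) in cases *; have e0 : 0 <= e := sqrtr_ge0 _.
have CRe : C = Rw * mu * (e * e).
  by rewrite -expr2 sqr_sqrtr ?divr_ge0 ?mulr_ge0 ?ltW //; field; rewrite !gt_eqF.
have e_lt1 : e < 1.
  by rewrite -sqrtr1 ltr_sqrt // ltr_pdivrMr ?mulr_gt0 // mul1r -ltr_pdivrMr.
set m := opt_rate mu lam e.
have m_opt x : 0 <= x <= lam -> welfare mu Rw C x <= welfare mu Rw C m.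
  by move=> x01; apply: welfare_le_opt => //; exact: ltW.
have m_bound : (1 + e) * m <= mu - C / Rw by exact: opt_rate_bound.
have m_gt0 : 0 < m by rewrite lt_min lam_gt0 subr_gt0 gtr_pMr.
have m_le_lam : m <= lam by rewrite ge_min lexx.
have q01 : 0 < m / lam <= 1 by rewrite divr_gt0 //= ler_pdivrMr // mul1r.
have supp_le x : rv_support P L x -> x <= lmax by move/supp_in/andP=> [].
have fee_ok : C * mean_wait P L mu (m / lam) <= Rw.
  apply: (mean_wait_le_Rw L_ge0 lmax_gt0 lmax_mu supp_lmax supp_le) => //.
  case: cases => [|[_ lmax_le]]; [by left | right].
  apply: le_trans m_bound; apply: le_trans (_ : m / lam * ((1 + e) * lam) <= _).
    by rewrite ler_wpM2l // divr_ge0 // ltW.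
  by rewrite mulrCA divfK ?gt_eqF.
have [p adm qS_p] :=
  qS_fee_exists L_ge0 lmax_gt0 lmax_mu supp_lmax supp_le _ _ _ C_gt0 q01 fee_ok.
rewrite (SWopt_C_eq lam_gt0 lam_mu C_gt0 CmuRw m_opt) ?m_gt0 ?m_le_lam //; last first.
  by apply: le_trans m_bound; nra.
split; first exact: (SWopt_P_le P L lam_gt0 lam_mu C_gt0 CmuRw m_opt).
apply/esym/(SWopt_S_eq P L lam_gt0 m_opt _ adm).
by rewrite qS_p mulrC divfK // gt_eqF.
Qed.
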